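(* Fix $\lambda_s>0$, $\lambda>0$ and $C>0$. For each $n\ge2$ let $\tilde n(n)$ be an integer with $0\le\tilde n(n)\le\min\{\binom n2, C\,n\log n\}$. Then there exist $C'>0$ and $N$ such that for all $n\ge N$ the average age $\Delta=\frac1n\sum_{i=1}^n\Delta_i$ of the greedy jammed network $G^{\mathrm{gr}}\big(n,\binom n2-\tilde n(n)\big)$ satisfies $\Delta\le C'\log n$.
   Context: Version-age model. A gossip network on a finite node set $\mathcal N$ is specified by source rates $\lambda_{0j}>0$ and gossip rates $\lambda_{ij}\ge 0$ ($i\neq j$; rate at which $i$ sends to $j$); $\lambda_s>0$ is the source's update rate. For nonempty $S\subseteq\mathcal N$ let $N(S)=\{i\in\mathcal N\setminus S:\ \sum_{j\in S}\lambda_{ij}>0\}$ and define $$\Delta_S=\frac{\lambda_s+\sum_{i\in N(S)}\big(\sum_{j\in S}\lambda_{ij}\big)\Delta_{S\cup\{i\}}}{\sum_{j\in S}\lambda_{0j}+\sum_{i\in N(S)}\sum_{j\in S}\lambda_{ij}}$$ (well defined by downward induction on $|S|$); $\Delta_i=\Delta_{\{i\}}$. Networks with uniform link rate: node set $\{1,\dots,n\}$, $\lambda_{0j}=\lambda/n$ for all $j$, and a set of links (unordered pairs of distinct nodes); for each link $\{a,b\}$, $\lambda_{ab}=\lambda_{ba}=\lambda/n$, and $\lambda_{ab}=0$ otherwise. The fully connected network has all $\binom n2$ pairs as links; $\tilde n$ jammers remove $\tilde n$ distinct links, leaving $\bar n=\binom n2-\tilde n$ links. Greedy configuration $G^{\mathrm{gr}}(n,\bar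 n)$ for $0\le\bar n\le\binom n2$: write uniquely $\bar n=\binom k2+c$ with $1\le k\le n$ and $0\le c\le k-1$; the links are all pairs $\{a,b\}$ with $1\le a<b\le k$, together with (if $c>0$) the pairs $\{j,k+1\}$ for $1\le j\le c$; there are no other links. *)

From HB Require Import structures.
From mathcomp Require Import all_boot all_order all_algebra.
From mathcomp Require Import all_classical all_reals exp.
Set Implicit Arguments. Unset Strict Implicit. Unset Printing Implicit Defensive.
Import Order.TTheory GRing.Theory Num.Theory.
Local Open Scope ring_scope.

Section VersionAge.
Variables (R : realType) (n : nat).
(* source update rate, source->node rates, gossip rates lam i j (i sends to j) *)
Variables (ls : R) (l0 : 'I_n -> R) (lam : 'I_n -> 'I_n -> R).

Definition rate_into (S : {set 'I_n}) (i : 'I_n) : R := \sum_(j in S) lam i j.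

Definition nbr (S : {set 'I_n}) : {set 'I_n} :=
  [set i | (i \notin S) && (0 < rate_into S i)].

(* Delta_S computed with fuel k; correct when k = n - #|S| (downward induction
   on |S|: every S :|: {i} with i \in N(S) has one more element). When S is the
   full set N(S) is empty, so the fuel-0 clause coincides with the general formula. *)
Fixpoint age_fuel (k : nat) (S : {set 'I_n}) : R :=
  match k with
  | 0 => ls / (\sum_(j in S) l0 j)
  | k.+1 => (ls + \sum_(i in nbr S) rate_into S i * age_fuel k (i |: S)) /
            (\sum_(j in S) l0 j + \sum_(i in nbr S) rate_into S i)
  end.

Definition age (S : {set 'I_n}) : R := age_fuel (n - #|S|) S.

Definition age1 (i : 'I_n) : R := age [set i].

Definition avg_age : R := n%:R^-1 * \sum_(i < n) age1 i.
End VersionAge.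

(* Greedy configuration G^gr(n, nbar): nbar = 'C(k,2) + c, 1 <= k <= n,
   0 <= c <= k-1.  k is the largest k <= n with 'C(k,2) <= nbar. *)
Definition greedy_k (n nbar : nat) : nat := \big[maxn/0%N]_(k < n.+1 | ('C(k, 2) <= nbar)%N) k.
Definition greedy_c (n nbar : nat) : nat := nbar - 'C(greedy_k n nbar, 2).

(* Nodes 1..n of the paper are 'I_n shifted by one: paper node a = i.+1.
   Paper links {a,b}, a<b: b <= k, or (b = k+1 and a <= c).
   0-indexed (a' = a-1, b' = b-1): b' < k, or (b' = k and a' < c). *)
Definition greedy_link (n nbar : nat) (i j : 'I_n) : bool :=
  let a := minn i j in let b := maxn i j in
  [&& (a < b)%N & ((b < greedy_k n nbar)%N || ((b == greedy_k n nbar) && (a < greedy_c n nbar)%N))].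
Arguments greedy_link : clear implicits.

Definition unif_l0 (R : realType) (n : nat) (l : R) : 'I_n -> R := fun _ => l / n%:R.
Definition unif_lam (R : realType) (n : nat) (l : R) (link : 'I_n -> 'I_n -> bool)
  : 'I_n -> 'I_n -> R := fun i j => if link i j then l / n%:R else 0.

Definition greedy_avg_age (R : realType) (ls l : R) (n nbar : nat) : R :=
  @avg_age R n ls (@unif_l0 R n l) (@unif_lam R n l (@greedy_link n nbar)).

From HB Require Import structures.
From mathcomp Require Import all_boot all_order all_algebra.
From mathcomp Require Import all_classical all_reals exp.
From mathcomp Require Import zify ring lra.
Import Order.TTheory GRing.Theory Num.Theory.
Local Open Scope ring_scope.

(* The basic
   tool is a comparison principle ([age_le]): a function B, defined on a family
   of sets that is closed under adding a neighbour, which is a supersolution of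
   the recursion dominates the age.  For networks whose source rates are all
   l/n we exhibit two supersolutions:
   - the constant alpha = ls n / l, the age of an isolated node
     ([age_le_isolated]);
   - when the nodes 0..k-1 form a clique of links of rate l/n, the function
     S |-> sum_(j = |S :&: K|..k) alpha / (j (k+1-j)) ([age_le_clique]); at a
     single clique node it equals 2 alpha H_k / (k+1) by partial fractions, and
     H_k <= 1 + ln k.
   In the greedy network with ntil links removed the first k nodes form a
   clique, and the maximality of k gives (n-k-1) n < 2 ntil <= 2 C n ln n, so at
   most 1 + 2 C ln n nodes lie outside it ([greedy_outside_le]).  Averaging
   yields age <= (ls/l) (3 + (2 + 2C) ln n) ([greedy_avg_age_le]), which is
   O(log n) because ln n >= ln 2. *)

Section Comparison.
Variables (R : realType) (n : nat) (ls : R) (l0 : 'I_n -> R) (lam : 'I_n -> 'I_n -> R).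

Lemma nbr_setT : nbr lam [set: 'I_n] = finset.set0.
Proof. by apply/setP => i; rewrite !inE. Qed.

Lemma nbr_rate_gt0 {S : {set 'I_n}} {i : 'I_n} : i \in nbr lam S -> 0 < rate_into lam S i.
Proof. by rewrite inE => /andP[]. Qed.

Lemma nbr_notin {S : {set 'I_n}} {i : 'I_n} : i \in nbr lam S -> i \notin S.
Proof. by rewrite inE => /andP[]. Qed.

Lemma super_of_drop (S D : {set 'I_n}) (B : {set 'I_n} -> R) (b d : R) :
  D \subset nbr lam S ->
  (forall i, i \in nbr lam S -> B (i |: S) = if i \in D then b - d else b) ->
  ls <= b * \sum_(j in S) l0 j + d * \sum_(i in D) rate_into lam S i ->
  ls + \sum_(i in nbr lam S) rate_into lam S i * B (i |: S)
    <= b * (\sum_(j in S) l0 j + \sum_(i in nbr lam S) rate_into lam S i).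
Proof.
move=> sDN HB Hls.
rewrite (eq_bigr (fun i => rate_into lam S i * b
   - (if i \in D then rate_into lam S i else 0) * d)); last first.
  by move=> i /HB ->; case: (i \in D); ring.
rewrite sumrB -!mulr_suml -big_mkcondr /=.
rewrite [X in _ - X * d](eq_bigl (mem D)) /=; last first.
  by move=> i; apply/andb_idl => /(fintype.subsetP sDN).
lra.
Qed.

Variables (Q : {set 'I_n} -> Prop) (B : {set 'I_n} -> R).
Hypothesis Q_src : forall S, Q S -> 0 < \sum_(j in S) l0 j.
Hypothesis Q_nbr : forall S i, Q S -> i \in nbr lam S -> Q (i |: S).
Hypothesis B_super : forall S, Q S ->
  ls + \sum_(i in nbr lam S) rate_into lam S i * B (i |: S)
  <= B S * (\sum_(j in S) l0 j + \sum_(i in nbr lam S) rate_into lam S i).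

Lemma age_fuel_le k S : Q S -> (n - #|S|)%N = k -> age_fuel ls l0 lam k S <= B S.
Proof.
elim: k S => [|k IH] S QS Hk /=.
  have ST : S = [set: 'I_n].
    by apply/eqP; rewrite eqEcard finset.subsetT cardsT card_ord; lia.
  have := B_super _ QS; rewrite ST nbr_setT !big_set0 !addr0 => super.
  by rewrite ler_pdivrMr // -ST; apply: Q_src.
have den_pos : 0 < \sum_(j in S) l0 j + \sum_(i in nbr lam S) rate_into lam S i.
  by apply: ltr_wpDr; [apply: sumr_ge0 => i /nbr_rate_gt0/ltW | apply: Q_src].
rewrite ler_pdivrMr //; apply: le_trans (B_super _ QS); rewrite lerD2l.
apply: ler_sum => i Ni; apply: ler_wpM2l; first exact/ltW/nbr_rate_gt0.
apply: IH; first exact: Q_nbr.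
by rewrite cardsU1 (nbr_notin Ni) add1n subnS Hk.
Qed.

Lemma age_le S : Q S -> age ls l0 lam S <= B S.
Proof. by move=> QS; apply: age_fuel_le. Qed.
End Comparison.
Arguments nbr_notin {R n lam S i}.
Arguments nbr_rate_gt0 {R n lam S i}.

Definition harmonic (R : realType) (k : nat) : R := \sum_(1 <= j < k.+1) (j%:R)^-1.

Section UniformSource.
Variables (R : realType) (n : nat) (ls l : R) (lam : 'I_n -> 'I_n -> R).
Hypotheses (ls_gt0 : 0 < ls) (l_gt0 : 0 < l).

(* The age of a node with no incoming gossip; it bounds every age. *)
Definition isolated_age : R := ls * n%:R / l.

Lemma isolated_age_ge0 : 0 <= isolated_age.
Proof. by rewrite /isolated_age divr_ge0 ?mulr_ge0 ?ler0n ?ltW. Qed.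

Lemma isolated_ageE : (0 < n)%N -> isolated_age * (l / n%:R) = ls.
Proof. by move=> n0; rewrite /isolated_age; field; rewrite pnatr_eq0 -lt0n n0 gt_eqF. Qed.

Lemma card_set_le (S : {set 'I_n}) : (#|S| <= n)%N.
Proof. by have := max_card (mem S); rewrite card_ord. Qed.

Lemma sum_unif_l0 (S : {set 'I_n}) : \sum_(j in S) unif_l0 l j = #|S|%:R * (l / n%:R).
Proof. by rewrite /unif_l0 sumr_const mulr_natl. Qed.

Lemma sum_unif_l0_gt0 (S : {set 'I_n}) : (0 < #|S|)%N -> 0 < \sum_(j in S) unif_l0 l j.
Proof.
move=> S0; have n0 : (0 < n)%N := leq_trans S0 (card_set_le S).
by rewrite sum_unif_l0 mulr_gt0 ?divr_gt0 ?ltr0n.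
Qed.

(* Every nonempty set has age at most [isolated_age]: the constant is a
   supersolution since |S| (l/n) isolated_age = |S| ls >= ls. *)
Lemma age_le_isolated (S : {set 'I_n}) :
  (0 < #|S|)%N -> age ls (unif_l0 l) lam S <= isolated_age.
Proof.
apply: (@age_le _ _ _ _ lam (fun S => (0 < #|S|)%N) (fun=> isolated_age)) => [T|T i|T] /= T0.
- exact: sum_unif_l0_gt0.
- by rewrite cardsU1 addn_gt0 T0 orbT.
have n0 : (0 < n)%N := leq_trans T0 (card_set_le T).
have srcE : isolated_age * (#|T|%:R * (l / n%:R)) = #|T|%:R * ls.
  by rewrite mulrCA isolated_ageE.
have ls_le : ls <= #|T|%:R * ls by apply: ler_peMl; [exact: ltW | rewrite ler1n].
rewrite -mulr_suml mulrDr sum_unif_l0 srcE [_ * isolated_age]mulrC; lra.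
Qed.

Section Clique.
Variable k : nat.
Hypothesis k_le_n : (k <= n)%N.
Hypothesis lam_ge0 : forall i j, 0 <= lam i j.
Hypothesis lam_clique :
  forall i j : 'I_n, i != j -> (i < k)%N -> (j < k)%N -> lam i j = l / n%:R.

Definition clique : {set 'I_n} := [set i : 'I_n | (i < k)%N].

(* clique_bound m bounds the age of any set meeting the clique in m >= 1 nodes;
   clique_gap m is the drop when one more clique node is reached. *)
Definition clique_gap (m : nat) : R := isolated_age / (m%:R * (k.+1 - m)%:R).

Definition clique_bound (m : nat) : R := \sum_(m <= j < k.+1) clique_gap j.

Lemma card_clique : #|clique| = k.
Proof.
rewrite cardsE -sum1_card (eq_bigl (fun i : 'I_n => (i < k)%N)) //.
by rewrite (big_ord_narrow (F := fun=> 1%N) k_le_n) sum1_card card_ord.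
Qed.

Lemma sum_clique_split (f : 'I_n -> R) (a b : R) :
  (forall i, i \in clique -> f i <= a) -> (forall i, f i <= b) ->
  \sum_(i < n) f i <= k%:R * a + (n - k)%:R * b.
Proof.
move=> f_in f_all; rewrite (bigID (mem clique)) /=.
rewrite [X in _ + X <= _](eq_bigl (mem (~: clique))); last by move=> i; rewrite /= finset.in_setC.
have card_out : #|~: clique| = (n - k)%N.
  by apply/eqP; rewrite -(eqn_add2l k) subnKC // -{1}card_clique cardsC card_ord.
apply: lerD; first by rewrite -card_clique mulr_natl -sumr_const; apply: ler_sum.
by rewrite -card_out mulr_natl -sumr_const; apply: ler_sum => i _.
Qed.

Lemma clique_gap_ge0 m : 0 <= clique_gap m.
Proof. by apply: divr_ge0; [exact: isolated_age_ge0 | apply: mulr_ge0]. Qed.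

Lemma clique_boundS m : (m <= k)%N -> clique_bound m = clique_gap m + clique_bound m.+1.
Proof. by move=> mk; rewrite /clique_bound big_ltn. Qed.

(* With m reached clique nodes: source rate >= m (l/n), rate from the k - m
   unreached ones >= (k - m) m (l/n); the gap is tuned so that these pay ls. *)
Lemma clique_gapE m : (0 < m <= k)%N ->
  clique_gap m * (m%:R * ((k - m)%:R + 1)) = isolated_age.
Proof.
move=> /andP[m0 mk]; rewrite /clique_gap natr1 -subSn // -natrM divfK //.
by rewrite pnatr_eq0 muln_eq0 negb_or; apply/andP; split; apply/eqP; lia.
Qed.

Lemma rate_into_clique {S : {set 'I_n}} {i : 'I_n} : i \in clique :\: S ->
  #|S :&: clique|%:R * (l / n%:R) <= rate_into lam S i.
Proof.
rewrite !inE => /andP[iS ik]; rewrite /rate_into (big_setID clique) /=.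
apply: ler_wpDr; first by apply: sumr_ge0 => j _; apply: lam_ge0.
rewrite mulr_natl -sumr_const; apply: ler_sum => j.
rewrite !inE => /andP[jS jk]; rewrite lam_clique ?lexx //.
by apply: contraNneq iS => ->.
Qed.

Lemma card_clique_add {S : {set 'I_n}} {i : 'I_n} : i \notin S ->
  #|(i |: S) :&: clique| = ((i \in clique) + #|S :&: clique|)%N.
Proof.
move=> iS; case iK: (i \in clique).
  have -> : (i |: S) :&: clique = i |: (S :&: clique).
    apply/setP => x; rewrite !(finset.in_setI, in_setU1).
    by case: (eqVneq x i) => [->|] /=; rewrite ?iK.
  by rewrite cardsU1 finset.in_setI (negbTE iS).
have -> // : (i |: S) :&: clique = S :&: clique.
apply/setP => x; rewrite !(finset.in_setI, in_setU1).
by case: (eqVneq x i) => [->|] /=; rewrite ?iK ?andbF.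
Qed.

(* The clique function is a supersolution, by [super_of_drop] with D the
   unreached clique nodes. *)
Lemma clique_super (S : {set 'I_n}) : (0 < #|S :&: clique|)%N ->
  ls + \sum_(i in nbr lam S) rate_into lam S i * clique_bound #|(i |: S) :&: clique|
  <= clique_bound #|S :&: clique| *
     (\sum_(j in S) unif_l0 l j + \sum_(i in nbr lam S) rate_into lam S i).
Proof.
set m := #|S :&: clique| => m0.
have mk : (m <= k)%N by rewrite -card_clique subset_leq_card // subsetIr.
have mS : (m <= #|S|)%N by rewrite subset_leq_card // subsetIl.
have n0 : (0 < n)%N := leq_trans (leq_trans m0 mS) (card_set_le S).
set u := l / n%:R; have u_gt0 : 0 < u by rewrite divr_gt0 ?ltr0n.
have card_new : #|clique :\: S| = (k - m)%N by rewrite cardsD card_clique finset.setIC.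
apply: (@super_of_drop _ _ _ _ _ _ (clique :\: S)
  (fun T => clique_bound #|T :&: clique|) (clique_bound m) (clique_gap m)).
- apply/fintype.subsetP => i iD; rewrite inE; apply/andP; split.
    by move: iD; rewrite finset.in_setD => /andP[].
  by apply: lt_le_trans (rate_into_clique iD); rewrite mulr_gt0 ?ltr0n.
- move=> i Ni /=; rewrite (card_clique_add (nbr_notin Ni)) finset.in_setD (nbr_notin Ni).
  by case: (i \in clique); rewrite ?add1n ?add0n // (clique_boundS _ mk) addrC addKr.
have new_rate : (k - m)%:R * (m%:R * u) <= \sum_(i in clique :\: S) rate_into lam S i.
  by rewrite -card_new mulr_natl -sumr_const; apply: ler_sum => i /rate_into_clique.
have gap_le : clique_gap m <= clique_bound m.
  by rewrite (clique_boundS _ mk) lerDl sumr_ge0 // => j _; apply: clique_gap_ge0.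
have old_rate : clique_gap m * (m%:R * u) <= clique_bound m * (#|S|%:R * u).
  apply: ler_pM => //; first exact: clique_gap_ge0.
    by rewrite mulr_ge0 ?ler0n ?ltW.
  by rewrite ler_pM2r // ler_nat.
have new_rate' := ler_wpM2l (clique_gap_ge0 m) new_rate.
have lsE : ls = clique_gap m * (m%:R * u) + clique_gap m * ((k - m)%:R * (m%:R * u)).
  by rewrite -(isolated_ageE n0) -/u -(clique_gapE m) ?m0 //; ring.
rewrite sum_unif_l0 -/u lsE; lra.
Qed.

Lemma age_le_clique (S : {set 'I_n}) : (0 < #|S :&: clique|)%N ->
  age ls (unif_l0 l) lam S <= clique_bound #|S :&: clique|.
Proof.
apply: (@age_le _ _ _ _ lam (fun S => (0 < #|S :&: clique|)%N)
          (fun S => clique_bound #|S :&: clique|)) => [T|T i|T] /= T0.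
- by apply: sum_unif_l0_gt0; apply: leq_trans T0 (subset_leq_card (finset.subsetIl _ _)).
- by move=> _; apply: leq_trans T0 (subset_leq_card (finset.setSI _ (finset.subsetUr _ _))).
- exact: clique_super.
Qed.
End Clique.

(* Partial fractions: 1/(j (k+1-j)) = (1/j + 1/(k+1-j)) / (k+1). *)
Lemma clique_bound1E k :
  clique_bound k 1 = isolated_age / k.+1%:R * (harmonic R k + harmonic R k).
Proof.
rewrite /clique_bound /harmonic.
transitivity (\sum_(1 <= j < k.+1)
    isolated_age / k.+1%:R * ((j%:R)^-1 + ((k.+1 - j)%:R)^-1)).
  apply: eq_big_nat => j /andP[j1 jk]; rewrite /clique_gap natrB; last by lia.
  have jk' : j%:R <= k%:R :> R by rewrite ler_nat; lia.
  have j1' : 1 <= j%:R :> R by rewrite ler1n.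
  field; rewrite !gt_eqF //; lra.
rewrite -mulr_sumr big_split /=; congr (_ * (_ + _)).
rewrite big_nat_rev; apply: eq_big_nat => j /andP[j1 jk].
by congr ((_ : nat)%:R^-1); lia.
Qed.

Lemma clique_bound1_le k : k%:R * clique_bound k 1 <= 2 * isolated_age * harmonic R k.
Proof.
have H0 : 0 <= harmonic R k by apply: sumr_ge0 => j _; rewrite invr_ge0 ler0n.
have k_le : k%:R / k.+1%:R <= 1 :> R by rewrite ler_pdivrMr ?ltr0n // mul1r ler_nat.
have rhs0 : 0 <= 2 * isolated_age * harmonic R k.
  by apply: mulr_ge0 => //; apply: mulr_ge0 => //; exact: isolated_age_ge0.
rewrite clique_bound1E.
have -> : k%:R * (isolated_age / k.+1%:R * (harmonic R k + harmonic R k))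
  = k%:R / k.+1%:R * (2 * isolated_age * harmonic R k) by ring.
by rewrite ler_piMl.
Qed.
End UniformSource.

(* Concavity of ln: 1/(k+1) <= ln (k+1) - ln k. *)
Lemma inv_le_ln_diff (R : realType) (k : nat) : (0 < k)%N ->
  (k.+1%:R)^-1 <= ln (k.+1%:R : R) - ln (k%:R).
Proof.
move=> k0; have k0' : 0 < k%:R :> R by rewrite ltr0n.
have k1 : 0 < k.+1%:R :> R by rewrite ltr0n.
have gtm1 : -1 < - (k.+1%:R : R)^-1 by rewrite ltrN2 invf_lt1 // ltr1n; lia.
have ratioE : 1 + - (k.+1%:R : R)^-1 = k%:R / k.+1%:R.
  by rewrite -natr1; field; rewrite natr1 gt_eqF.
have := le_ln1Dx gtm1; rewrite ratioE ln_div ?posrE //.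
set t := _^-1; set a := ln _; set b := ln _; lra.
Qed.

Lemma harmonic_le_ln (R : realType) (k : nat) : (0 < k)%N -> harmonic R k <= 1 + ln (k%:R : R).
Proof.
elim: k => [//|k IH] _; case: (posnP k) => [->|k0].
  by rewrite /harmonic big_nat1 ln1 invr1 addr0.
have -> : harmonic R k.+1 = harmonic R k + (k.+1%:R)^-1 by rewrite /harmonic big_nat_recr.
move: (IH k0) (@inv_le_ln_diff R k k0).
set h := harmonic R k; set t := _^-1; set a := ln _; set b := ln _; lra.
Qed.

Lemma greedy_k_le n nbar : (greedy_k n nbar <= n)%N.
Proof. by apply/bigmax_leqP => i _; rewrite -ltnS. Qed.

Lemma greedy_k_max n nbar :
  (greedy_k n nbar < n)%N -> (nbar < 'C((greedy_k n nbar).+1, 2))%N.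
Proof.
move=> kn; rewrite ltnNge; apply/negP => bin_le.
have := @leq_bigmax_cond _ (fun k : 'I_n.+1 => ('C(k, 2) <= nbar)%N) val
  (Ordinal (kn : (greedy_k n nbar).+1 < n.+1)%N) bin_le.
by rewrite ltnn.
Qed.

Lemma greedy_link_clique n nbar (i j : 'I_n) : i != j ->
  (i < greedy_k n nbar)%N -> (j < greedy_k n nbar)%N -> greedy_link n nbar i j.
Proof.
move=> /eqP ij ik jk; have ij' : (i : nat) <> j by move=> /val_inj.
by rewrite /greedy_link; apply/andP; split; [lia | apply/orP; left; lia].
Qed.

Lemma bin2_double m : (2 * 'C(m, 2) = m * m.-1)%N.
Proof. by elim: m => [//|m IH]; rewrite binS bin1 mulnDr IH; case: m {IH} => //= m; nia. Qed.

(* If the clique is not everything, the removed links number more than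
   'C(n, 2) - 'C(k+1, 2) >= (n - k - 1) n / 2. *)
Lemma greedy_deficit n t : (t <= 'C(n, 2))%N ->
  (greedy_k n ('C(n, 2) - t) < n)%N ->
  ((n - (greedy_k n ('C(n, 2) - t)).+1) * n < 2 * t)%N.
Proof.
move=> tn kn; have := @greedy_k_max _ _ kn; move: kn.
set k := greedy_k _ _ => kn lt.
have [X nE] : exists X, n = (X + k.+1)%N by exists (n - k.+1)%N; rewrite subnK.
have e1 : (2 * 'C(n, 2) = n * (X + k))%N by rewrite bin2_double {2}nE addnS.
have e2 : (2 * 'C(k.+1, 2) = k.+1 * k)%N by rewrite bin2_double.
have nk : (k.+1 * k <= n * k)%N by rewrite leq_mul2r kn orbT.
rewrite {1}nE addnK; nia.
Qed.

Lemma greedy_outside_le (R : realType) (C : R) (n t : nat) : 0 < C -> (0 < n)%N ->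
  (t <= 'C(n, 2))%N -> t%:R <= C * n%:R * ln (n%:R : R) ->
  (n - greedy_k n ('C(n, 2) - t))%:R <= 1 + 2 * C * ln (n%:R : R).
Proof.
move=> C0 n0 tn; set k := greedy_k _ _; set L := ln _ => tC.
have L0 : 0 <= L by rewrite /L ln_ge0 // ler1n.
have CL0 : 0 <= 2 * C * L by rewrite !mulr_ge0 // ltW.
have [kn|nk] := ltnP k n; last first.
  by move: nk; rewrite -subn_eq0 => /eqP ->; lra.
have deficit : (n - k.+1)%:R * n%:R < 2 * C * L * n%:R :> R.
  apply: lt_le_trans (_ : 2 * t%:R <= _).
    by rewrite -!natrM ltr_nat greedy_deficit.
  have -> : 2 * C * L * n%:R = 2 * (C * n%:R * L) by ring.
  by rewrite ler_pM2l.
rewrite ltr_pM2r ?ltr0n // in deficit.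
have -> : (n - k = (n - k.+1) + 1)%N by lia.
by rewrite natrD; lra.
Qed.

(* Node-wise: clique nodes have age at most clique_bound k 1, the others at
   most alpha; summing gives 2 alpha (1 + ln n) + (1 + 2 C ln n) alpha. *)
Lemma greedy_age_sum_le (R : realType) (ls l C : R) (n t : nat) :
  0 < ls -> 0 < l -> 0 < C -> (0 < n)%N ->
  (t <= 'C(n, 2))%N -> t%:R <= C * n%:R * ln (n%:R : R) ->
  \sum_(i < n) age1 ls (unif_l0 l) (unif_lam l (greedy_link n ('C(n, 2) - t))) i
    <= isolated_age R n ls l * (3 + (2 + 2 * C) * ln (n%:R : R)).
Proof.
move=> ls0 l0 C0 n0 tn tC.
set nbar := ('C(n, 2) - t)%N; set lam := unif_lam l (greedy_link n nbar).
pose k := greedy_k n nbar; set L := ln _.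
set alpha := isolated_age R n ls l; set F1 := clique_bound R n ls l k 1.
have kn : (k <= n)%N := greedy_k_le _ _.
have alpha0 : 0 <= alpha := @isolated_age_ge0 R n ls l ls0 l0.
have lam_ge0 : forall i j, 0 <= lam i j.
  by move=> i j; rewrite /lam /unif_lam; case: ifP => // _; rewrite divr_ge0 ?ler0n ?ltW.
have lam_clique : forall i j : 'I_n, i != j -> (i < k)%N -> (j < k)%N -> lam i j = l / n%:R.
  by move=> i j ij ik jk; rewrite /lam /unif_lam greedy_link_clique.
have age_in i : i \in clique n k -> age1 ls (unif_l0 l) lam i <= F1.
  move=> iK; have := @age_le_clique R n ls l lam ls0 l0 k kn lam_ge0 lam_clique [set i].
  by rewrite (finset.setIidPl _) ?cards1 ?finset.sub1set //; apply.
have age_all i : age1 ls (unif_l0 l) lam i <= alpha.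
  by apply: age_le_isolated; rewrite ?cards1.
have in_le : k%:R * F1 <= 2 * alpha * (1 + L).
  apply: le_trans (@clique_bound1_le R n ls l ls0 l0 k) _; apply: ler_wpM2l.
    by rewrite mulr_ge0.
  have [->|k0] := posnP k; first by rewrite /harmonic big_geq // addr_ge0 ?ln_ge0 ?ler1n.
  by apply: le_trans (@harmonic_le_ln R k k0) _; rewrite lerD2l ler_ln ?posrE ?ltr0n ?ler_nat.
have out_le : (n - k)%:R * alpha <= (1 + 2 * C * L) * alpha.
  by rewrite ler_wpM2r ?greedy_outside_le.
have -> : alpha * (3 + (2 + 2 * C) * L) = 2 * alpha * (1 + L) + (1 + 2 * C * L) * alpha.
  by ring.
exact: le_trans (@sum_clique_split R n k kn _ _ _ age_in age_all) (lerD in_le out_le).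
Qed.

(* Dividing by n, using alpha = (ls / l) n. *)
Lemma greedy_avg_age_le (R : realType) (ls l C : R) (n t : nat) :
  0 < ls -> 0 < l -> 0 < C -> (0 < n)%N ->
  (t <= 'C(n, 2))%N -> t%:R <= C * n%:R * ln (n%:R : R) ->
  greedy_avg_age ls l n ('C(n, 2) - t) <= ls / l * (3 + (2 + 2 * C) * ln (n%:R : R)).
Proof.
move=> ls0 l0 C0 n0 tn tC; rewrite /greedy_avg_age /avg_age.
have inv_n : 0 <= n%:R^-1 :> R by rewrite invr_ge0 ler0n.
apply: le_trans (ler_wpM2l inv_n (@greedy_age_sum_le R ls l C n t ls0 l0 C0 n0 tn tC)) _.
rewrite le_eqVlt; apply/orP; left; apply/eqP; rewrite /isolated_age; field.
by rewrite pnatr_eq0 -lt0n n0 gt_eqF.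
Qed.

(* Main theorem: the average age is O(log n); the constant absorbs the additive
   term 3 using ln n >= ln 2. *)
Theorem lemma5 (R : realType) (ls l C : R) (ntil : nat -> nat) :
  0 < ls -> 0 < l -> 0 < C ->
  (forall n : nat, (2 <= n)%N ->
     (ntil n <= 'C(n, 2))%N /\ (ntil n)%:R <= C * n%:R * ln (n%:R : R)) ->
  exists C' : R, 0 < C' /\
  exists N : nat, forall n : nat, (N <= n)%N ->
    greedy_avg_age ls l n ('C(n, 2) - ntil n) <= C' * ln (n%:R : R).
Proof.
move=> ls0 l0 C0 ntil_le; set ln2 := ln (2%:R : R).
have ln2_gt0 : 0 < ln2 by rewrite ln_gt0 // ltr1n.
have c0 : 0 < 3 / ln2 by rewrite divr_gt0.
exists (ls / l * (3 / ln2 + 2 + 2 * C)); split.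
  apply: mulr_gt0; first exact: divr_gt0.
  by move: c0; set a := 3 / ln2; lra.
exists 2%N => n n2; have [tn tC] := ntil_le n n2.
apply: le_trans (@greedy_avg_age_le R ls l C n _ ls0 l0 C0 (leq_trans _ n2) tn tC) _ => //.
rewrite -[X in _ <= X]mulrA; apply: ler_wpM2l; first by rewrite divr_ge0 ?ltW.
have ln2_le : ln2 <= ln (n%:R : R) by rewrite ler_ln ?posrE ?ltr0n ?ler_nat // (leq_trans _ n2).
have three_le : 3 <= 3 / ln2 * ln (n%:R : R).
  by rewrite mulrAC ler_pdivlMr // ler_pM2l.
set L := ln _ in ln2_le three_le *; set a := 3 / ln2 in three_le *; lra.
Qed.
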